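(* Let $\Delta$ and $\Delta'$ be fat triangles, and let $S(\Delta)$, $S(\Delta')$ be sets of canonical chords (one per vertex) of $\Delta$ and $\Delta'$ respectively, with $P(\Delta)$ the set of endpoints of the chords in $S(\Delta)$. If $\Delta$ intersects $\Delta'$, then at least one of the following holds: (i) $\Delta$ contains a vertex of $\Delta'$; (ii) a point from $P(\Delta)$ lies inside $\Delta'$; (iii) a canonical chord from $S(\Delta)$ intersects a canonical chord from $S(\Delta')$.
   Context: Fix an absolute constant $\alpha>0$; a triangle is fat if its minimum angle is at least $\alpha$. Let $A:=\{i\cdot(\alpha/2): 0\le i\le\lfloor 4\pi/\alpha\rfloor\}$ be the set of canonical directions (angles). A canonical segment is a segment whose direction is in $A$. A canonical chord of a fat triangle $\Delta$ is a canonical segment connecting a vertex of $\Delta$ to the opposite side of $\Delta$ (each vertex of a fat triangle admits one). $S(\Delta)$ is a set of three canonical chords of $\Delta$, one per vertex, and $P(\Delta)$ is the set of endpoints of these chords (which includes the vertices of $\Delta$). *)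

From Stdlib Require Export Reals.
Open Scope R_scope.

Definition point := (R * R)%type.

Definition vsub (p q : point) : point := (fst p - fst q, snd p - snd q).
Definition dot (u v : point) : R := fst u * fst v + snd u * snd v.
Definition norm (u : point) : R := sqrt (dot u u).
Definition cross (u v : point) : R := fst u * snd v - snd u * fst v.

Definition angle_at (a b c : point) : R :=
  acos (dot (vsub b a) (vsub c a) / (norm (vsub b a) * norm (vsub c a))).

Record ptriangle := Tri { tA : point; tB : point; tC : point }.

Definition nondegenerate (t : ptriangle) : Prop :=
  cross (vsub (tB t) (tA t)) (vsub (tC t) (tA t)) <> 0.

Definition vertices (t : ptriangle) : list point := tA t :: tB t :: tC t :: nil.

Definition in_triangle (t : ptriangle) (p : point) : Prop :=
  exists l1 l2 l3 : R, 0 <= l1 /\ 0 <= l2 /\ 0 <= l3 /\ l1 + l2 + l3 = 1 /\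
    fst p = l1 * fst (tA t) + l2 * fst (tB t) + l3 * fst (tC t) /\
    snd p = l1 * snd (tA t) + l2 * snd (tB t) + l3 * snd (tC t).

Definition on_segment (p q x : point) : Prop :=
  exists s : R, 0 <= s <= 1 /\
    fst x = fst p + s * (fst q - fst p) /\ snd x = snd p + s * (snd q - snd p).

Definition fat (alpha : R) (t : ptriangle) : Prop :=
  nondegenerate t /\
  alpha <= angle_at (tA t) (tB t) (tC t) /\
  alpha <= angle_at (tB t) (tC t) (tA t) /\
  alpha <= angle_at (tC t) (tA t) (tB t).

Definition canonical_angle (alpha theta : R) : Prop :=
  exists i : nat, INR i <= 4 * PI / alpha /\ theta = INR i * (alpha / 2).

Definition canonical_segment (alpha : R) (p q : point) : Prop :=
  exists theta r : R, canonical_angle alpha theta /\ 0 < r /\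
    ((vsub q p = (r * cos theta, r * sin theta)) \/
     (vsub p q = (r * cos theta, r * sin theta))).

Definition canonical_chord_from (alpha : R) (v b c e : point) : Prop :=
  on_segment b c e /\ canonical_segment alpha v e.

(* A chord system S(t): endpoints e1, e2, e3 of the canonical chords
   from tA, tB, tC respectively. *)
Definition chord_system (alpha : R) (t : ptriangle) (e : point * point * point) : Prop :=
  let '(e1, e2, e3) := e in
  canonical_chord_from alpha (tA t) (tB t) (tC t) e1 /\
  canonical_chord_from alpha (tB t) (tC t) (tA t) e2 /\
  canonical_chord_from alpha (tC t) (tA t) (tB t) e3.

Definition chords (t : ptriangle) (e : point * point * point) : list (point * point) :=
  let '(e1, e2, e3) := e in (tA t, e1) :: (tB t, e2) :: (tC t, e3) :: nil.

Definition chord_points (t : ptriangle) (e : point * point * point) : list point :=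
  let '(e1, e2, e3) := e in tA t :: tB t :: tC t :: e1 :: e2 :: e3 :: nil.

Definition segments_intersect (s1 s2 : point * point) : Prop :=
  exists x, on_segment (fst s1) (snd s1) x /\ on_segment (fst s2) (snd s2) x.

From Stdlib Require Import Reals List Lra Psatz Classical.
Open Scope R_scope.

(* Suppose no vertex of T' lies in T and no point of P(T) lies in T'.  Going
   from the vertex tA T (outside T') towards a common point, one enters T'
   through a side [v, w] at a point z, and z lies in T by convexity.  A segment
   whose endpoints lie outside a triangle but which meets it enters and leaves
   through two different sides, hence crosses the chord issued from their
   common vertex.  So [v, w] meets a chord c of T at a point of T'; the
   endpoints of c are in P(T), hence outside T', and the same argument applied
   to c and T' yields a chord of T' meeting c. *)

Definition lerp (p q : point) (s : R) : point :=
  (fst p + s * (fst q - fst p), snd p + s * (snd q - snd p)).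

Lemma on_segmentP p q x :
  on_segment p q x <-> exists s, 0 <= s <= 1 /\ x = lerp p q s.
Proof.
  split.
  - intros [s [Hs [E1 E2]]]; exists s; split; [exact Hs|].
    destruct x; unfold lerp; simpl in *; congruence.
  - intros [s [Hs ->]]; exists s; repeat split; tauto.
Qed.

Lemma on_segment_lerp p q s : 0 <= s <= 1 -> on_segment p q (lerp p q s).
Proof. intros Hs; apply on_segmentP; eauto. Qed.

Lemma on_segment_l p q : on_segment p q p.
Proof. exists 0; repeat split; lra. Qed.

Lemma on_segment_r p q : on_segment p q q.
Proof. exists 1; repeat split; lra. Qed.

Lemma on_segment_sym p q x : on_segment p q x -> on_segment q p x.
Proof. intros [s [Hs [E1 E2]]]; exists (1 - s); repeat split; lra. Qed.

Lemma on_segment_trans p q x y z :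
  on_segment p q x -> on_segment p q y -> on_segment x y z -> on_segment p q z.
Proof.
  intros [a [Ha [X1 X2]]] [b [Hb [Y1 Y2]]] [s [Hs [Z1 Z2]]].
  exists (a + s * (b - a)); split; [nra|].
  rewrite Z1, Z2, X1, X2, Y1, Y2; split; ring.
Qed.

Lemma segments_intersect_sub p q x y c :
  on_segment p q x -> on_segment p q y ->
  segments_intersect (x, y) c -> segments_intersect (p, q) c.
Proof.
  intros Hx Hy [z [Hz Hc]]; exists z; split; [|exact Hc].
  exact (on_segment_trans p q x y z Hx Hy Hz).
Qed.

Definition affine_map (f : point -> R) : Prop :=
  forall p q s, f (lerp p q s) = f p + s * (f q - f p).

Lemma affine_neg_on_segment f p q x :
  affine_map f -> on_segment p q x -> f p < 0 -> f q < 0 -> f x < 0.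
Proof.
  intros Hf Hx Hp Hq; apply on_segmentP in Hx as [s [Hs ->]].
  rewrite Hf; nra.
Qed.

Lemma affine_entry (a b : R) : 0 <= a + b ->
  exists z, 0 <= z <= 1 /\ (0 < z <-> a < 0) /\ (a < 0 -> a + z * b = 0) /\
    forall s, z <= s <= 1 -> 0 <= a + s * b.
Proof.
  intros H1; destruct (Rlt_dec a 0) as [Ha|Ha].
  - assert (Hb : 0 < b) by lra.
    exists (- a / b).
    assert (Ez : - a / b * b = - a) by (field; lra).
    assert (Hz : 0 < - a / b) by (apply Rdiv_lt_0_compat; lra).
    repeat split; intros; try lra.
    + apply (Rmult_le_reg_r b); lra.
    + nra.
  - exists 0; repeat split; intros; try lra.
    destruct (Rle_dec 0 b); nra.
Qed.

(* Take the largest of the three entry parameters given by [affine_entry]. *)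
Lemma affine3_first_entry (a1 b1 a2 b2 a3 b3 : R) :
  0 <= a1 + b1 -> 0 <= a2 + b2 -> 0 <= a3 + b3 ->
  a1 < 0 \/ a2 < 0 \/ a3 < 0 ->
  exists s, 0 <= s <= 1 /\
    0 <= a1 + s * b1 /\ 0 <= a2 + s * b2 /\ 0 <= a3 + s * b3 /\
    ((a1 < 0 /\ a1 + s * b1 = 0) \/ (a2 < 0 /\ a2 + s * b2 = 0) \/
     (a3 < 0 /\ a3 + s * b3 = 0)).
Proof.
  intros H1 H2 H3 Hneg.
  destruct (affine_entry a1 b1 H1) as [z1 [Z1 [P1 [E1 N1]]]].
  destruct (affine_entry a2 b2 H2) as [z2 [Z2 [P2 [E2 N2]]]].
  destruct (affine_entry a3 b3 H3) as [z3 [Z3 [P3 [E3 N3]]]].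
  set (m := Rmax z1 (Rmax z2 z3)).
  assert (M1 : z1 <= m) by apply Rmax_l.
  assert (M2 : z2 <= m) by (eapply Rle_trans; [apply Rmax_l | apply Rmax_r]).
  assert (M3 : z3 <= m) by (eapply Rle_trans; [apply Rmax_r | apply Rmax_r]).
  assert (Hm : m = z1 \/ m = z2 \/ m = z3).
  { unfold m; apply Rmax_case; [tauto|apply Rmax_case; tauto]. }
  assert (Mpos : 0 < m).
  { destruct Hneg as [N|[N|N]]; [apply P1 in N | apply P2 in N | apply P3 in N]; lra. }
  exists m; split; [destruct Hm as [-> | [-> | ->]]; lra|].
  repeat split; [apply N1 | apply N2 | apply N3 | ]; try lra.
  destruct Hm as [E|[E|E]]; rewrite E in Mpos |- *;
    [left; apply P1 in Mpos | right; left; apply P2 in Mpos | right; right; apply P3 in Mpos];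
    auto.
Qed.

Lemma affine3_boundary_crossing f1 f2 f3 y x :
  affine_map f1 -> affine_map f2 -> affine_map f3 ->
  0 <= f1 x -> 0 <= f2 x -> 0 <= f3 x ->
  f1 y < 0 \/ f2 y < 0 \/ f3 y < 0 ->
  exists q, on_segment y x q /\ 0 <= f1 q /\ 0 <= f2 q /\ 0 <= f3 q /\
    ((f1 y < 0 /\ f1 q = 0) \/ (f2 y < 0 /\ f2 q = 0) \/ (f3 y < 0 /\ f3 q = 0)).
Proof.
  intros A1 A2 A3 H1 H2 H3 Hneg.
  destruct (affine3_first_entry (f1 y) (f1 x - f1 y) (f2 y) (f2 x - f2 y)
              (f3 y) (f3 x - f3 y)) as [s [Hs Hsigns]]; try lra.
  exists (lerp y x s); rewrite A1, A2, A3; split; [now apply on_segment_lerp | exact Hsigns].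
Qed.

Definition area2 (t : ptriangle) : R := cross (vsub (tB t) (tA t)) (vsub (tC t) (tA t)).

Definition baryB (t : ptriangle) (p : point) : R :=
  cross (vsub p (tA t)) (vsub (tC t) (tA t)) / area2 t.
Definition baryC (t : ptriangle) (p : point) : R :=
  cross (vsub (tB t) (tA t)) (vsub p (tA t)) / area2 t.
Definition baryA (t : ptriangle) (p : point) : R := 1 - baryB t p - baryC t p.

Lemma baryB_affine t : affine_map (baryB t).
Proof. intros p q s; unfold baryB, lerp, cross, vsub, Rdiv; simpl; ring. Qed.

Lemma baryC_affine t : affine_map (baryC t).
Proof. intros p q s; unfold baryC, lerp, cross, vsub, Rdiv; simpl; ring. Qed.

Lemma baryA_affine t : affine_map (baryA t).
Proof. intros p q s; unfold baryA; rewrite baryB_affine, baryC_affine; ring. Qed.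

Lemma bary_decompose t p : nondegenerate t ->
  fst p = baryA t p * fst (tA t) + baryB t p * fst (tB t) + baryC t p * fst (tC t) /\
  snd p = baryA t p * snd (tA t) + baryB t p * snd (tB t) + baryC t p * snd (tC t).
Proof.
  unfold nondegenerate, baryA, baryB, baryC, area2, cross, vsub; simpl; intros H.
  split; field; exact H.
Qed.

Lemma in_triangle_bary t p : nondegenerate t ->
  in_triangle t p <-> 0 <= baryA t p /\ 0 <= baryB t p /\ 0 <= baryC t p.
Proof.
  intros H; split.
  - intros [m1 [m2 [m3 [H1 [H2 [H3 [Hs [E1 E2]]]]]]]].
    assert (EB : baryB t p = m2 /\ baryC t p = m3).
    { unfold nondegenerate in H; unfold baryB, baryC, area2, cross, vsub in *; simpl in *.
      rewrite E1, E2; replace m1 with (1 - m2 - m3) by lra; split; field; exact H. }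
    unfold baryA; destruct EB as [-> ->]; lra.
  - intros [H1 [H2 H3]]; destruct (bary_decompose t p H) as [E1 E2].
    exists (baryA t p), (baryB t p), (baryC t p); repeat split; auto.
    unfold baryA; ring.
Qed.

Lemma baryA_zero_on_side t p : nondegenerate t -> in_triangle t p -> baryA t p = 0 ->
  on_segment (tB t) (tC t) p.
Proof.
  intros H Hp Z; apply (in_triangle_bary t p H) in Hp as [_ [HB HC]].
  destruct (bary_decompose t p H) as [E1 E2]; rewrite Z in E1, E2.
  assert (S : baryB t p = 1 - baryC t p) by (unfold baryA in Z; lra).
  exists (baryC t p); rewrite E1, E2, S; repeat split; lra.
Qed.

Lemma baryB_zero_on_side t p : nondegenerate t -> in_triangle t p -> baryB t p = 0 ->
  on_segment (tC t) (tA t) p.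
Proof.
  intros H Hp Z; apply (in_triangle_bary t p H) in Hp as [HA [_ HC]].
  destruct (bary_decompose t p H) as [E1 E2]; rewrite Z in E1, E2.
  assert (S : baryC t p = 1 - baryA t p) by (unfold baryA in *; lra).
  exists (baryA t p); rewrite E1, E2, S; repeat split; lra.
Qed.

Lemma baryC_zero_on_side t p : nondegenerate t -> in_triangle t p -> baryC t p = 0 ->
  on_segment (tA t) (tB t) p.
Proof.
  intros H Hp Z; apply (in_triangle_bary t p H) in Hp as [HA [HB _]].
  destruct (bary_decompose t p H) as [E1 E2]; rewrite Z in E1, E2.
  assert (S : baryA t p = 1 - baryB t p) by (unfold baryA in *; lra).
  exists (baryB t p); rewrite E1, E2, S; repeat split; lra.
Qed.

Lemma in_triangle_convex t x y z :
  in_triangle t x -> in_triangle t y -> on_segment x y z -> in_triangle t z.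
Proof.
  intros [a1 [a2 [a3 [A1 [A2 [A3 [A4 [A5 A6]]]]]]]]
         [b1 [b2 [b3 [B1 [B2 [B3 [B4 [B5 B6]]]]]]]] [s [Hs [E1 E2]]].
  exists ((1 - s) * a1 + s * b1), ((1 - s) * a2 + s * b2), ((1 - s) * a3 + s * b3).
  rewrite E1, E2, A5, A6, B5, B6; repeat split; nra.
Qed.

Lemma in_triangle_vertex t v : In v (vertices t) -> in_triangle t v.
Proof.
  simpl; intros [<- | [<- | [<- | []]]];
    [exists 1, 0, 0 | exists 0, 1, 0 | exists 0, 0, 1]; repeat split; lra.
Qed.

Lemma triangle_boundary_crossing t y x :
  nondegenerate t -> in_triangle t x -> ~ in_triangle t y ->
  exists q, on_segment y x q /\ in_triangle t q /\
    ((baryA t y < 0 /\ baryA t q = 0) \/ (baryB t y < 0 /\ baryB t q = 0) \/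
     (baryC t y < 0 /\ baryC t q = 0)).
Proof.
  intros H Hx Hy.
  rewrite (in_triangle_bary t x H) in Hx; rewrite (in_triangle_bary t y H) in Hy.
  destruct Hx as [HA [HB HC]].
  destruct (affine3_boundary_crossing (baryA t) (baryB t) (baryC t) y x)
    as [q [Hq [QA [QB [QC Hside]]]]];
    auto using baryA_affine, baryB_affine, baryC_affine.
  - apply NNPP; intros N; apply Hy; repeat split; apply Rnot_lt_le; tauto.
  - exists q; rewrite (in_triangle_bary t q H); tauto.
Qed.

Definition cevian_feet (t : ptriangle) (E : point * point * point) : Prop :=
  let '(e1, e2, e3) := E in
  on_segment (tB t) (tC t) e1 /\ on_segment (tC t) (tA t) e2 /\ on_segment (tA t) (tB t) e3.

Lemma chord_system_cevian_feet alpha t E : chord_system alpha t E -> cevian_feet t E.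
Proof.
  destruct E as [[e1 e2] e3]; unfold chord_system, canonical_chord_from, cevian_feet; tauto.
Qed.

Lemma cevian_meets_segment_between_sides (vi vj vk e x y : point) :
  on_segment vj vk x -> on_segment vk vi y -> on_segment vi vj e ->
  segments_intersect (x, y) (vk, e).
Proof.
  intros Hx Hy He; apply on_segment_sym in Hx; apply on_segment_sym in He.
  destruct Hx as [a [Ha [X1 X2]]], Hy as [b [Hb [Y1 Y2]]], He as [u [Hu [E1 E2]]].
  unfold segments_intersect; simpl.
  destruct (Req_dec (a * u + b * (1 - u)) 0) as [D0|D0].
  - assert (Vx : a = 0 \/ b = 0) by (destruct (Req_dec a 0); [left|right]; nra).
    exists vk; split; [|apply on_segment_l].
    destruct Vx as [Z|Z]; rewrite Z in *; [|apply on_segment_sym];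
      exists 0; repeat split; lra.
  - set (D := a * u + b * (1 - u)) in *.
    assert (HD : 0 < D) by (unfold D in *; nra).
    set (s := a * u / D).
    assert (Hs : s * D = a * u) by (unfold s; field; lra).
    assert (Hs0 : 0 <= s) by nra.
    assert (Hs1 : s <= 1) by (unfold D in *; nra).
    exists (lerp x y s); split; [now apply on_segment_lerp|].
    exists ((1 - s) * a + s * b); split; [nra|].
    unfold lerp; simpl; rewrite X1, X2, Y1, Y2, E1, E2; unfold s, D in *.
    split; field; lra.
Qed.

Lemma triangle_segment_meets_chord t E p q z :
  nondegenerate t -> cevian_feet t E ->
  ~ in_triangle t p -> ~ in_triangle t q -> on_segment p q z -> in_triangle t z ->
  exists c, In c (chords t E) /\ segments_intersect (p, q) c.
Proof.
  intros H HE Hp Hq Hz Hzt.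
  destruct E as [[e1 e2] e3]; destruct HE as [He1 [He2 He3]].
  destruct (triangle_boundary_crossing t p z H Hzt Hp) as [x [Hx [Hxt Sx]]].
  destruct (triangle_boundary_crossing t q z H Hzt Hq) as [y [Hy [Hyt Sy]]].
  assert (Xpq : on_segment p q x)
    by exact (on_segment_trans p q p z x (on_segment_l p q) Hz Hx).
  assert (Ypq : on_segment p q y)
    by exact (on_segment_trans p q z q y Hz (on_segment_r p q) (on_segment_sym _ _ _ Hy)).
  assert (Hz' := Hzt); rewrite (in_triangle_bary t z H) in Hz'.
  destruct Sx as [[Nx Zx]|[[Nx Zx]|[Nx Zx]]];
  destruct Sy as [[Ny Zy]|[[Ny Zy]|[Ny Zy]]].
  - exfalso; assert (N := affine_neg_on_segment _ p q z (baryA_affine t) Hz Nx Ny); lra.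
  - exists (tC t, e3); split; [simpl; tauto|].
    apply (segments_intersect_sub p q x y); auto.
    apply (cevian_meets_segment_between_sides (tA t) (tB t));
      auto using baryA_zero_on_side, baryB_zero_on_side.
  - exists (tB t, e2); split; [simpl; tauto|].
    apply (segments_intersect_sub p q y x); auto.
    apply (cevian_meets_segment_between_sides (tC t) (tA t));
      auto using baryA_zero_on_side, baryC_zero_on_side.
  - exists (tC t, e3); split; [simpl; tauto|].
    apply (segments_intersect_sub p q y x); auto.
    apply (cevian_meets_segment_between_sides (tA t) (tB t));
      auto using baryA_zero_on_side, baryB_zero_on_side.
  - exfalso; assert (N := affine_neg_on_segment _ p q z (baryB_affine t) Hz Nx Ny); lra.
  - exists (tA t, e1); split; [simpl; tauto|].
    apply (segments_intersect_sub p q x y); auto.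
    apply (cevian_meets_segment_between_sides (tB t) (tC t));
      auto using baryB_zero_on_side, baryC_zero_on_side.
  - exists (tB t, e2); split; [simpl; tauto|].
    apply (segments_intersect_sub p q x y); auto.
    apply (cevian_meets_segment_between_sides (tC t) (tA t));
      auto using baryA_zero_on_side, baryC_zero_on_side.
  - exists (tA t, e1); split; [simpl; tauto|].
    apply (segments_intersect_sub p q y x); auto.
    apply (cevian_meets_segment_between_sides (tB t) (tC t));
      auto using baryB_zero_on_side, baryC_zero_on_side.
  - exfalso; assert (N := affine_neg_on_segment _ p q z (baryC_affine t) Hz Nx Ny); lra.
Qed.

Lemma side_through_triangle_chords_intersect T T' E E' v w z :
  nondegenerate T -> nondegenerate T' -> cevian_feet T E -> cevian_feet T' E' ->
  In v (vertices T') -> In w (vertices T') ->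
  (forall u, In u (vertices T') -> ~ in_triangle T u) ->
  on_segment v w z -> in_triangle T z ->
  (forall p, In p (chord_points T E) -> ~ in_triangle T' p) ->
  exists c c', In c (chords T E) /\ In c' (chords T' E') /\ segments_intersect c c'.
Proof.
  intros H H' HE HE' Hv Hw NV Hz HzT NP.
  destruct (triangle_segment_meets_chord T E v w z H HE (NV v Hv) (NV w Hw) Hz HzT)
    as [[c1 c2] [Hc [r [Hr Hrc]]]].
  assert (Nc : ~ in_triangle T' c1 /\ ~ in_triangle T' c2).
  { destruct E as [[e1 e2] e3]; simpl in Hc.
    destruct Hc as [Hc | [Hc | [Hc | []]]]; injection Hc as <- <-;
      split; apply NP; simpl; tauto. }
  assert (HrT' : in_triangle T' r)
    by exact (in_triangle_convex T' v w r (in_triangle_vertex T' v Hv)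
                (in_triangle_vertex T' w Hw) Hr).
  destruct (triangle_segment_meets_chord T' E' c1 c2 r H' HE' (proj1 Nc) (proj2 Nc)
              Hrc HrT') as [c' [Hc' Hcc']].
  exists (c1, c2), c'; auto.
Qed.

Theorem mainTheorem10 (alpha : R) (T T' : ptriangle) (E E' : point * point * point) :
  0 < alpha ->
  fat alpha T -> fat alpha T' ->
  chord_system alpha T E -> chord_system alpha T' E' ->
  (exists x, in_triangle T x /\ in_triangle T' x) ->
  (exists v, In v (vertices T') /\ in_triangle T v) \/
  (exists p, In p (chord_points T E) /\ in_triangle T' p) \/
  (exists s s', In s (chords T E) /\ In s' (chords T' E') /\ segments_intersect s s').
Proof.
  intros _ [H _] [H' _] HE HE' [x [HxT HxT']].
  apply chord_system_cevian_feet in HE, HE'.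
  destruct (classic (exists v, In v (vertices T') /\ in_triangle T v)) as [|NV]; [now left|].
  destruct (classic (exists p, In p (chord_points T E) /\ in_triangle T' p)) as [|NP];
    [now right; left|].
  right; right.
  assert (NV' : forall v, In v (vertices T') -> ~ in_triangle T v) by eauto.
  assert (NP' : forall p, In p (chord_points T E) -> ~ in_triangle T' p) by eauto.
  assert (NA : ~ in_triangle T' (tA T)) by (apply NP'; destruct E as [[e1 e2] e3]; simpl; tauto).
  destruct (triangle_boundary_crossing T' (tA T) x H' HxT' NA) as [z [Hz [HzT' Hside]]].
  assert (HzT : in_triangle T z).
  { apply (in_triangle_convex T (tA T) x z); auto.
    apply in_triangle_vertex; simpl; tauto. }
  destruct Hside as [[_ Z] | [[_ Z] | [_ Z]]];
    [ apply (side_through_triangle_chords_intersect T T' E E' (tB T') (tC T') z)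
    | apply (side_through_triangle_chords_intersect T T' E E' (tC T') (tA T') z)
    | apply (side_through_triangle_chords_intersect T T' E E' (tA T') (tB T') z) ];
    simpl; auto 6 using baryA_zero_on_side, baryB_zero_on_side, baryC_zero_on_side.
Qed.
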